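(* In the setup below, let $V\subseteq K_2^T(C)$ be the subgroup generated by all elements $R(i;j,k|l;m,n)$ and $T(i,j|k,l|m,n)$. Then $V$ is generated by the elements $R(1;1,j\,|\,2;1,m)$ for $1<j\le N_1$, $1<m\le N_2$; $T(1,1\,|\,k,l\,|\,m,n)$ for $2\le k<m\le N$, $1\le l\le N_k$, $1\le n\le N_m$; $T(1,j\,|\,2,1\,|\,m,n)$ for $2\le j\le N_1$, $3\le m\le N$, $1\le n\le N_m$. (The number of these generators equals $\sum_{1\le i<k\le N}N_iN_k-\sum_{i}N_i+1$.)
   Context: Let $K$ be a field, $N\ge2$, $N_1,\dots,N_N\ge1$. For $1\le i\le N$, $1\le j\le N_i$ let $L_{i,j}=a_ix+b_iy+c_{i,j}$ with $a_i,b_i,c_{i,j}\in K$, $(a_i,b_i)\ne(0,0)$, such that the affine lines $L_{i,j}=0$ are pairwise distinct and $[i,k]:=a_ib_k-a_kb_i\neq0$ for $i\neq k$. For $\lambda\in K^*$ put $f(x,y)=\lambda\prod_{i,j}L_{i,j}-1$; let $C$ be the normalisation of the projective closure of the (irreducible) affine curve $f=0$ and $F$ its function field, with the $L_{i,j}$ viewed in $F^*$. $K_2(F)$ is the abelian group generated by symbols $\{a,b\}$, bimultiplicative and with $\{a,1-a\}=0$; $K_2^T(C)$ is the kernel of the sum of the tame symbols $T_x(\{a,b\})=(-1)^{\mathrm{ord}_x a\,\mathrm{ord}_x b}(a^{\mathrm{ord}_x b}/b^{\mathrm{ord}_x a})(x)$ over all closed points $x$ of $C$. Define $R(i;j,k\,|\,l;m,n)=\{L_{i,j}/L_{i,k},\,L_{l,m}/L_{l,n}\}$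 ($i\ne l$) and $T(i,j\,|\,k,l\,|\,m,n)=\Bigl\{\frac{[i,m]}{[k,m]}\frac{L_{k,l}}{L_{i,j}},\,\frac{[i,k]}{[m,k]}\frac{L_{m,n}}{L_{i,j}}\Bigr\}$ ($i,k,m$ pairwise distinct); these lie in $K_2^T(C)$. *)

From HB Require Import structures.
From mathcomp Require Import all_boot all_order all_algebra.
Set Implicit Arguments. Unset Strict Implicit. Unset Printing Implicit Defensive.
Import Order.TTheory GRing.Theory Num.Theory.
Local Open Scope ring_scope.

(* Indices are 1-based natural numbers as in the paper:
   1 <= i <= N, 1 <= j <= Ns i. *)

Section Defs.
Variables (K F : fieldType) (iota : {rmorphism K -> F}).
Variables (a b : nat -> K) (c : nat -> nat -> K).

Definition br (i k : nat) : K := a i * b k - a k * b i.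

(* L_{i,j} as a bivariate polynomial in {poly {poly K}}:
   the inner variable is x, the outer variable is y. *)
Definition Lpoly (i j : nat) : {poly {poly K}} :=
  ((a i)%:P * 'X + (c i j)%:P)%:P + (b i)%:P%:P * 'X.

Definition fpoly (N : nat) (Ns : nat -> nat) (lam : K) : {poly {poly K}} :=
  lam%:P%:P * \prod_(1 <= i < N.+1) \prod_(1 <= j < (Ns i).+1) Lpoly i j - 1.

Definition eval2 (x y : F) (p : {poly {poly K}}) : F :=
  (map_poly (fun q : {poly K} => (map_poly iota q).[x]) p).[y].

Definition LF (x y : F) (i j : nat) : F :=
  iota (a i) * x + iota (b i) * y + iota (c i j).

(* Steinberg symbols on F^* with values in an abelian group G.
   K_2(F) is (Matsumoto) the target of the universal such symbol. *)
Definition steinberg (G : zmodType) (s : F -> F -> G) : Prop :=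
  [/\ forall u v w, u != 0 -> v != 0 -> w != 0 -> s (u * v) w = s u w + s v w,
      forall u v w, u != 0 -> v != 0 -> w != 0 -> s u (v * w) = s u v + s u w
    & forall u, u != 0 -> u != 1 -> s u (1 - u) = 0].

Variables (x y : F) (G : zmodType) (s : F -> F -> G).

Definition Rsym (i j k l m n : nat) : G :=
  s (LF x y i j / LF x y i k) (LF x y l m / LF x y l n).

Definition Tsym (i j k l m n : nat) : G :=
  s (iota (br i m / br k m) * (LF x y k l / LF x y i j))
    (iota (br i k / br m k) * (LF x y m n / LF x y i j)).

End Defs.

Definition in_span (G : zmodType) (P : G -> Prop) (v : G) : Prop :=
  exists t : seq (int * G),
    (forall p, p \in t -> P p.2) /\ v = \sum_(p <- t) p.2 *~ p.1.

From HB Require Import structures.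
From mathcomp Require Import all_boot all_order all_algebra.
From mathcomp Require Import ring zify.
Set Implicit Arguments. Unset Strict Implicit. Unset Printing Implicit Defensive.
Import Order.TTheory GRing.Theory Num.Theory.
Local Open Scope ring_scope.

(* All generators reduce to the listed ones through four relations between the
   symbols, each a consequence of bilinearity and [{u, 1 - u} = 0]:
   - [T] is alternating in its three arguments (i,j), (k,l), (m,n);
   - cocycle relation: the alternating sum of the four [T]'s built on four
     lines of pairwise distinct directions vanishes, as the Plücker relation
     [0,2][1,3] = [0,1][2,3] + [0,3][1,2] makes it a symbol [{u, 1 - u}];
   - the second difference of [T] in the line indices j and l is an [R];
   - [R] is bilinear in the ratios L_{i,j}/L_{i,1}.
   The cocycle relation with base line L_{1,1}, then with L_{1,j} and L_{2,1},
   expresses every [T] through the listed generators; bilinearity and the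
   second differences then do the same for every [R]. *)

Ltac field_nz := field; do ?[apply/andP; split]; rewrite ?oppr_eq0 ?oner_eq0.

Section SteinbergSymbol.
Variables (F : fieldType) (G : zmodType) (s : F -> F -> G).
Hypothesis hs : steinberg s.

Lemma symbolMl u v w : u != 0 -> v != 0 -> w != 0 -> s (u * v) w = s u w + s v w.
Proof. by case: hs => + _ _; apply. Qed.

Lemma symbolMr u v w : u != 0 -> v != 0 -> w != 0 -> s u (v * w) = s u v + s u w.
Proof. by case: hs => _ + _; apply. Qed.

Lemma symbol_subr u : u != 0 -> u != 1 -> s u (1 - u) = 0.
Proof. by case: hs => _ _; apply. Qed.

Lemma symbol1l w : w != 0 -> s 1 w = 0.
Proof.
move=> w0; have := symbolMl (oner_neq0 F) (oner_neq0 F) w0.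
by rewrite mulr1 -{1}[s 1 w]addr0 => /addrI <-.
Qed.

Lemma symbol1r w : w != 0 -> s w 1 = 0.
Proof.
move=> w0; have := symbolMr w0 (oner_neq0 F) (oner_neq0 F).
by rewrite mulr1 -{1}[s w 1]addr0 => /addrI <-.
Qed.

Lemma symbolVl u w : u != 0 -> w != 0 -> s u^-1 w = - s u w.
Proof.
move=> u0 w0; apply/eqP; rewrite -addr_eq0 -symbolMl ?invr_eq0 //.
by rewrite mulVf // symbol1l.
Qed.

Lemma symbolVr u w : u != 0 -> w != 0 -> s w u^-1 = - s w u.
Proof.
move=> u0 w0; apply/eqP; rewrite -addr_eq0 -symbolMr ?invr_eq0 //.
by rewrite mulVf // symbol1r.
Qed.

Lemma symbolN u : u != 0 -> s u (- u) = 0.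
Proof.
move=> u0; have [->|u1] := eqVneq u 1; first by rewrite symbol1l ?oppr_eq0 ?oner_eq0.
have uV1 : u^-1 != 1 by rewrite invr_eq1.
have sub_neq0 (v : F) : v != 1 -> 1 - v != 0 by rewrite subr_eq0 eq_sym.
have -> : - u = (1 - u) * (1 - u^-1)^-1.
  apply: (mulIf (sub_neq0 _ uV1)); rewrite mulfVK ?sub_neq0 //.
  by rewrite mulrBr mulr1 mulNr mulfV //; ring.
rewrite symbolMr ?invr_eq0 ?sub_neq0 // symbolVr ?sub_neq0 // symbol_subr // add0r.
by rewrite -{1}(invrK u) symbolVl ?invr_eq0 ?sub_neq0 // symbol_subr ?invr_eq0 // !oppr0.
Qed.

Lemma symbolC u v : u != 0 -> v != 0 -> s v u = - s u v.
Proof.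
move=> u0 v0; have uv0 : u * v != 0 by rewrite mulf_neq0.
have := symbolN uv0; rewrite symbolMl ?oppr_eq0 //.
rewrite -[X in s u X]mulNr -[X in s v X]mulrN !symbolMr ?oppr_eq0 //.
by rewrite !symbolN // add0r addr0 => /eqP; rewrite addr_eq0 => /eqP ->; rewrite opprK.
Qed.

Lemma symbol_self u : u != 0 -> s u u = s (-1) u.
Proof.
move=> u0; have := symbolN u0; rewrite -(mulrN1 u) symbolMr ?oppr_eq0 ?oner_eq0 //.
by move=> /eqP; rewrite addr_eq0 => /eqP ->; rewrite -symbolC ?oppr_eq0 ?oner_eq0.
Qed.

Lemma symbolVV u v : u != 0 -> v != 0 -> s u^-1 v^-1 = s u v.
Proof. by move=> u0 v0; rewrite symbolVl ?invr_eq0 // symbolVr // opprK. Qed.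

Lemma symbolV_oppr u v : u != 0 -> v != 0 -> s u^-1 (- u^-1 * v) = - s u v.
Proof.
move=> u0 v0; rewrite symbolMr ?oppr_eq0 ?invr_eq0 // symbolN ?invr_eq0 //.
by rewrite add0r symbolVl.
Qed.

Lemma symbol_divl u v w : u != 0 -> v != 0 -> w != 0 -> s (u / v) w = s u w - s v w.
Proof. by move=> u0 v0 w0; rewrite symbolMl ?invr_eq0 // symbolVl. Qed.

Lemma symbol_divr u v w : u != 0 -> v != 0 -> w != 0 -> s w (u / v) = s w u - s w v.
Proof. by move=> u0 v0 w0; rewrite symbolMr ?invr_eq0 // symbolVr. Qed.

End SteinbergSymbol.

Section AlternatingSum.
Variables (G : zmodType) (g : nat -> nat -> G).
Hypothesis gC : forall i j, g j i = - g i j.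
Hypothesis g_diag : forall i, g i i = g 0%N i.

Lemma g0_mulrz_even i z : (2 %| z)%Z -> g 0%N i *~ z = 0.
Proof.
case/dvdzP=> q ->; rewrite mulrC mulrzA.
have -> : g 0%N i *~ 2 = 0 by rewrite -g_diag -[2]/(1 + 1) mulrzDr mulr1z {1}gC addNr.
by rewrite mul0rz.
Qed.

(* Column [n] of [\sum_(i, j) g i j *~ M i j] collapses to
   [g 0 n *~ (M 0 n - M n 0 + M n n)] plus the terms [g i n *~ (M i n - M n i)],
   0 < i < n; [g 0 n] is 2-torsion. *)
Definition admissible_column (M : nat -> nat -> int) (n : nat) : bool :=
  if n is n'.+1 then
    (2 %| M 0%N n - M n 0%N + M n n)%Z && all (fun i => M i n == M n i) (iota 1 n')
  else (2 %| M 0%N 0%N)%Z.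

Lemma sum_alternating_eq0 (M : nat -> nat -> int) n :
  (forall k, (k < n)%N -> admissible_column M k) ->
  \sum_(0 <= i < n) \sum_(0 <= j < n) g i j *~ M i j = 0.
Proof.
elim: n => [|n IH] admM; first by rewrite big_geq.
rewrite big_nat_recr //=.
under eq_bigr => i _ do rewrite big_nat_recr //=.
rewrite big_split /= IH => [|k /ltnW]; last exact: admM.
rewrite add0r big_nat_recr //= addrA -big_split /=.
under eq_bigr => i _ do rewrite (gC i n) mulNrz -mulrzBr.
have := admM n (ltnSn n); case: n {IH admM} => [|n] /= admn.
  by rewrite big_geq // add0r g0_mulrz_even.
case/andP: admn => even0 /allP symM.
rewrite big_ltn // big_nat big1 => [|i /andP[i1 lt_in]]; last first.
  by rewrite (eqP (symM i _)) ?subrr ?mulr0z // mem_iota i1 add1n.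
by rewrite addr0 g_diag -mulrzDr g0_mulrz_even.
Qed.

End AlternatingSum.

(* Symbols of words in the generators [xs], whose first entry is [-1], expand
   bilinearly into integer combinations of the [s (gen i) (gen j)]; since [s]
   is antisymmetric and [s u u = s (-1) u], such a combination vanishes as soon
   as its coefficient matrix passes [admissible_column], which is checked by
   computation. *)
Section WordExpansion.
Variables (F : fieldType) (G : zmodType) (s : F -> F -> G).
Hypothesis hs : steinberg s.
Variable xs : seq F.
Hypothesis xs_head : nth 1 xs 0 = -1.
Hypothesis xs_neq0 : all (fun x => x != 0) xs.

Local Notation gen i := (nth 1 xs i).

Definition letter (f : nat * bool) : F := if f.2 then gen f.1 else (gen f.1)^-1.
Definition word (w : seq (nat * bool)) : F := foldr (fun f u => letter f * u) 1 w.
Definition letter_sign (f : nat * bool) : int := if f.2 then 1 else -1.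

Lemma gen_neq0 i : gen i != 0.
Proof.
have [lt_i|le_i] := ltnP i (size xs); last by rewrite nth_default ?oner_eq0.
by apply: (allP xs_neq0); rewrite mem_nth.
Qed.

Lemma letter_neq0 f : letter f != 0.
Proof. by rewrite /letter; case: f.2; rewrite ?invr_eq0 gen_neq0. Qed.

Lemma word_neq0 w : word w != 0.
Proof. by elim: w => [|f w IH] /=; rewrite ?oner_eq0 ?mulf_neq0 ?letter_neq0. Qed.

Lemma symbol_letterl f w : w != 0 -> s (letter f) w = s (gen f.1) w *~ letter_sign f.
Proof.
by move=> w0; rewrite /letter /letter_sign; case: f.2; rewrite ?mulr1z ?mulrN1z ?symbolVl ?gen_neq0.
Qed.

Lemma symbol_letterr f w : w != 0 -> s w (letter f) = s w (gen f.1) *~ letter_sign f.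
Proof.
by move=> w0; rewrite /letter /letter_sign; case: f.2; rewrite ?mulr1z ?mulrN1z ?symbolVr ?gen_neq0.
Qed.

Lemma symbol_word w1 w2 : s (word w1) (word w2) =
  \sum_(f1 <- w1) \sum_(f2 <- w2) s (gen f1.1) (gen f2.1) *~ (letter_sign f1 * letter_sign f2).
Proof.
have symbol_wordr u w : u != 0 -> s u (word w) = \sum_(f <- w) s u (gen f.1) *~ letter_sign f.
  move=> u0; elim: w => [|f w IH] /=; first by rewrite big_nil symbol1r.
  by rewrite symbolMr ?letter_neq0 ?word_neq0 // big_cons IH symbol_letterr.
elim: w1 => [|f w1 IH] /=; first by rewrite big_nil symbol1l ?word_neq0.
rewrite symbolMl ?letter_neq0 ?word_neq0 // big_cons IH symbol_letterl ?word_neq0 //.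
rewrite symbol_wordr ?gen_neq0 // mulrz_suml; congr (_ + _); apply: eq_bigr => f2 _.
by rewrite mulrzA_C.
Qed.

Definition word_relation := seq (int * seq (nat * bool) * seq (nat * bool)).

Definition expansion (ts : word_relation) : seq (nat * nat * int) :=
  flatten (map (fun t => flatten (map (fun f1 => map (fun f2 =>
     (f1.1, f2.1, t.1.1 * (letter_sign f1 * letter_sign f2))) t.2) t.1.2)) ts).

Definition coef (l : seq (nat * nat * int)) (i j : nat) : int :=
  foldr (fun p z => (if (p.1.1 == i) && (p.1.2 == j) then p.2 else 0) + z) 0 l.

Lemma sum_word_relation ts :
  \sum_(t <- ts) s (word t.1.2) (word t.2) *~ t.1.1 =
  \sum_(p <- expansion ts) s (gen p.1.1) (gen p.1.2) *~ p.2.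
Proof.
rewrite big_flatten big_map /=; apply: eq_bigr => t _.
rewrite big_flatten big_map symbol_word mulrz_suml; apply: eq_bigr => f1 _.
rewrite big_map mulrz_suml; apply: eq_bigr => f2 _ /=.
by rewrite mulrzA_C.
Qed.

Lemma sum_coef n (l : seq (nat * nat * int)) :
  all (fun p => (p.1.1 < n)%N && (p.1.2 < n)%N) l ->
  \sum_(p <- l) s (gen p.1.1) (gen p.1.2) *~ p.2 =
  \sum_(0 <= i < n) \sum_(0 <= j < n) s (gen i) (gen j) *~ coef l i j.
Proof.
elim: l => [|p l IH] /=.
  by rewrite big_nil big1 // => i _; rewrite big1.
case/andP=> /andP[lt_p1 lt_p2] /IH {}IH; rewrite big_cons IH /coef /=.
under [RHS]eq_bigr => i _ do under eq_bigr => j _ do rewrite mulrzDr.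
under [RHS]eq_bigr => i _ do rewrite big_split /=.
rewrite big_split /=; congr (_ + _).
transitivity (\sum_(0 <= i < n) if i == p.1.1 then s (gen i) (gen p.1.2) *~ p.2 else 0).
  by rewrite -big_mkcond big_nat1_eq /= lt_p1.
apply: eq_bigr => i _; rewrite (eq_sym p.1.1); have [->|_] /= := eqVneq i p.1.1; last first.
  by rewrite big1 // => j _; rewrite mulr0z.
transitivity (\sum_(0 <= j < n) if j == p.1.2 then s (gen p.1.1) (gen j) *~ p.2 else 0).
  by rewrite -big_mkcond big_nat1_eq /= lt_p2.
by apply: eq_bigr => j _; rewrite (eq_sym p.1.2); case: eqP; rewrite ?mulr0z.
Qed.

Definition check_word_relation (n : nat) (ts : word_relation) : bool :=
  let l := expansion ts in
  all (fun p => (p.1.1 < n)%N && (p.1.2 < n)%N) l &&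
  all (admissible_column (coef l)) (iota 0 n).

Lemma word_relation_eq0 ts (us : seq (int * F * F)) :
  check_word_relation (size xs) ts ->
  map (fun t => (t.1.1, word t.1.2, word t.2)) ts = us ->
  \sum_(u <- us) s u.1.2 u.2 *~ u.1.1 = 0.
Proof.
case/andP=> bounded /allP adm <-; rewrite big_map sum_word_relation (sum_coef bounded).
apply: sum_alternating_eq0 => [i j|i|k lt_k]; last by apply: adm; rewrite mem_iota.
  by rewrite symbolC ?gen_neq0.
by rewrite xs_head symbol_self ?gen_neq0.
Qed.

End WordExpansion.


Section SymbolIdentities.
Variables (F : fieldType) (G : zmodType) (s : F -> F -> G).
Hypothesis hs : steinberg s.

Lemma symbol_div_div p q r t : p != 0 -> q != 0 -> r != 0 -> t != 0 ->
  s (p / q) (r / t) = s p r - s p t - (s q r - s q t).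
Proof.
by move=> p0 q0 r0 t0; rewrite symbol_divl ?mulf_neq0 ?invr_eq0 // !symbol_divr.
Qed.

Lemma symbol_second_difference beta gamma u u' v v' w :
  beta != 0 -> gamma != 0 -> u != 0 -> u' != 0 -> v != 0 -> v' != 0 -> w != 0 ->
  s (beta * (v / u)) (gamma * (w / u)) - s (beta * (v' / u)) (gamma * (w / u))
  - (s (beta * (v / u')) (gamma * (w / u')) - s (beta * (v' / u')) (gamma * (w / u')))
  = s (u' / u) (v' / v).
Proof.
move=> b0 g0 u0 u'0 v0 v'0 w0.
have vv0 : v' / v != 0 by rewrite mulf_neq0 ?invr_eq0.
have uu0 : u' / u != 0 by rewrite mulf_neq0 ?invr_eq0.
have Q0 (z : F) : z != 0 -> gamma * (w / z) != 0 by move=> z0; rewrite !mulf_neq0 ?invr_eq0.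
have diff_v (z : F) : z != 0 -> s (beta * (v / z)) (gamma * (w / z))
    - s (beta * (v' / z)) (gamma * (w / z)) = - s (v' / v) (gamma * (w / z)).
  move=> z0; have -> : beta * (v' / z) = beta * (v / z) * (v' / v) by field_nz.
  by rewrite [s (_ * (v' / v)) _]symbolMl ?Q0 ?mulf_neq0 ?invr_eq0 // opprD addNKr.
rewrite !diff_v // opprK addrC -symbol_divr ?Q0 //.
have -> : gamma * (w / u') / (gamma * (w / u)) = (u' / u)^-1 by field_nz.
by rewrite symbolVr // [s (v' / v) _]symbolC // opprK.
Qed.

Lemma symbol_cocycle b01 b02 b03 b12 b13 b23 L0 L1 L2 L3 :
  b01 != 0 -> b02 != 0 -> b03 != 0 -> b12 != 0 -> b13 != 0 -> b23 != 0 ->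
  L0 != 0 -> L1 != 0 -> L2 != 0 -> L3 != 0 ->
  b02 * b13 = b01 * b23 + b03 * b12 ->
  s ((b13 / b23) * (L2 / L1)) ((b12 / - b23) * (L3 / L1))
  - s ((b03 / b23) * (L2 / L0)) ((b02 / - b23) * (L3 / L0))
  + s ((b03 / b13) * (L1 / L0)) ((b01 / - b13) * (L3 / L0))
  - s ((b02 / b12) * (L1 / L0)) ((b01 / - b12) * (L2 / L0)) = 0.
Proof.
move=> h01 h02 h03 h12 h13 h23 hL0 hL1 hL2 hL3 plucker.
set u := b02 * b13 / (b01 * b23).
have u0 : u != 0 by rewrite !mulf_neq0 ?invr_eq0 ?mulf_neq0.
have sub_u : 1 - u = - (b03 * b12) / (b01 * b23) by rewrite /u plucker; field_nz.
have u1 : u != 1.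
  have : 1 - u != 0 by rewrite sub_u !mulf_neq0 ?oppr_eq0 ?invr_eq0 ?mulf_neq0.
  by rewrite subr_eq0 eq_sym.
(* The same relation, each argument written as a word in [xs]. *)
pose xs := [:: -1; b01; b02; b03; b12; b13; b23; L0; L1; L2; L3].
have xs_neq0 : all (fun z => z != 0) xs.
  by rewrite /= oppr_eq0 oner_eq0 h01 h02 h03 h12 h13 h23 hL0 hL1 hL2 hL3.
have := @word_relation_eq0 _ _ _ hs xs erefl xs_neq0
  [:: (1, [:: (5,true);(6,false);(9,true);(8,false)], [:: (4,true);(0,false);(6,false);(10,true);(8,false)]);
      (-1, [:: (3,true);(6,false);(9,true);(7,false)], [:: (2,true);(0,false);(6,false);(10,true);(7,false)]);
      (1, [:: (3,true);(5,false);(8,true);(7,false)], [:: (1,true);(0,false);(5,false);(10,true);(7,false)]);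
      (-1, [:: (2,true);(4,false);(8,true);(7,false)], [:: (1,true);(0,false);(4,false);(9,true);(7,false)]);
      (-1, [:: (2,true);(5,true);(1,false);(6,false)], [:: (0,true);(3,true);(4,true);(1,false);(6,false)])]
  [:: (1, (b13 / b23) * (L2 / L1), (b12 / - b23) * (L3 / L1));
      (-1, (b03 / b23) * (L2 / L0), (b02 / - b23) * (L3 / L0));
      (1, (b03 / b13) * (L1 / L0), (b01 / - b13) * (L3 / L0));
      (-1, (b02 / b12) * (L1 / L0), (b01 / - b12) * (L2 / L0));
      (-1, u, - (b03 * b12) / (b01 * b23))] erefl.
rewrite !big_cons big_nil /= !mulr1z !mulrN1z -[X in s u X]sub_u symbol_subr // oppr0 !addr0 !addrA.
apply; rewrite /u /=; repeat congr (_ :: _); try congr (_, _, _).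
all: by rewrite /letter /=; field_nz.
Qed.

End SymbolIdentities.

Section Span.
Variables (G : zmodType) (P : G -> Prop).

Lemma in_span0 : in_span P 0.
Proof. by exists [::]; rewrite big_nil. Qed.

Lemma in_span_gen v : P v -> in_span P v.
Proof.
move=> Pv; exists [:: (1, v)]; split; first by move=> p; rewrite inE => /eqP ->.
by rewrite big_seq1 mulr1z.
Qed.

Lemma in_spanD u v : in_span P u -> in_span P v -> in_span P (u + v).
Proof.
move=> [tu [Ptu ->]] [tv [Ptv ->]]; exists (tu ++ tv); rewrite big_cat; split => // p.
by rewrite mem_cat => /orP[/Ptu|/Ptv].
Qed.

Lemma in_spanMz u z : in_span P u -> in_span P (u *~ z).
Proof.
move=> [t [Pt ->]]; exists [seq (p.1 * z, p.2) | p <- t]; split.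
  by move=> p /mapP[q /Pt Pq ->].
by rewrite big_map mulrz_suml; apply: eq_bigr => p _; rewrite mulrzA.
Qed.

Lemma in_spanN u : in_span P u -> in_span P (- u).
Proof. by rewrite -mulrN1z; apply: in_spanMz. Qed.

Lemma in_spanB u v : in_span P u -> in_span P v -> in_span P (u - v).
Proof. by move=> Pu /in_spanN; apply: in_spanD. Qed.

Lemma in_span_subr u v : in_span P (u - v) -> in_span P v -> in_span P u.
Proof. by move=> Puv Pv; rewrite -(subrK v u); apply: in_spanD. Qed.

End Span.

Lemma in_span_trans (G : zmodType) (P Q : G -> Prop) :
  (forall v, P v -> in_span Q v) -> forall v, in_span P v -> in_span Q v.
Proof.
move=> PQ v [t [Pt ->]]; elim: t Pt => [|p t IH] Pt; first by rewrite big_nil; apply: in_span0.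
rewrite big_cons; apply: in_spanD; first by apply/in_spanMz/PQ/Pt; rewrite inE eqxx.
by apply: IH => q tq; apply: Pt; rewrite inE tq orbT.
Qed.

Lemma LF_neq0 (K F : fieldType) (iota : {rmorphism K -> F})
    (N : nat) (Ns : nat -> nat) (a b : nat -> K) (c : nat -> nat -> K) (lam : K) (x y : F) :
  eval2 iota x y (fpoly a b c N Ns lam) = 0 ->
  forall i j, (1 <= i <= N)%N -> (1 <= j <= Ns i)%N -> LF iota a b c x y i j != 0.
Proof.
pose E := (horner_eval y \o map_poly (horner_eval x \o map_poly iota)
  : {rmorphism {poly {poly K}} -> F}).
have evalE p : eval2 iota x y p = E p by [].
have E_C k : E k%:P%:P = iota k.
  by rewrite /E /= map_polyC horner_evalE hornerC /= horner_evalE map_polyC hornerC.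
have E_y : E 'X = y by rewrite /E /= map_polyX horner_evalE hornerX.
have E_x : E 'X%:P = x.
  by rewrite /E /= map_polyC horner_evalE hornerC /= horner_evalE map_polyX hornerX.
have E_L i j : E (Lpoly a b c i j) = LF iota a b c x y i j.
  rewrite /Lpoly /LF polyCD polyCM !rmorphD !rmorphM E_y !E_C E_x.
  by rewrite -addrA (addrC (iota (c i j))) addrA.
rewrite evalE /fpoly rmorphB rmorphM rmorph1 E_C rmorph_prod => /eqP; rewrite subr_eq0 => /eqP prod1.
have prod_neq0 : \prod_(1 <= i < N.+1) E (\prod_(1 <= j < (Ns i).+1) Lpoly a b c i j) != 0.
  by apply/eqP => prod0; move: prod1; rewrite prod0 mulr0 => /eqP; rewrite eq_sym oner_eq0.
move=> i j /andP[i1 iN] /andP[j1 jN]; move: prod_neq0.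
rewrite prodf_seq_neq0 => /allP /(_ i); rewrite mem_index_iota i1 ltnS iN => /(_ isT).
rewrite rmorph_prod prodf_seq_neq0 => /allP /(_ j).
by rewrite mem_index_iota j1 ltnS jN E_L => /(_ isT).
Qed.

Section Generators.
Variables (K F : fieldType) (iota : {rmorphism K -> F}).
Variables (N : nat) (Ns : nat -> nat) (a b : nat -> K) (c : nat -> nat -> K) (x y : F).
Variables (G : zmodType) (s : F -> F -> G).
Hypothesis hs : steinberg s.
Hypothesis N_ge2 : (2 <= N)%N.
Hypothesis Ns_gt0 : forall i, (1 <= i <= N)%N -> (1 <= Ns i)%N.
Hypothesis br_neq0 : forall i k, (1 <= i <= N)%N -> (1 <= k <= N)%N -> i != k -> br a b i k != 0.
Hypothesis L_neq0 : forall i j, (1 <= i <= N)%N -> (1 <= j <= Ns i)%N -> LF iota a b c x y i j != 0.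

Local Notation L := (LF iota a b c x y).
Local Notation R := (Rsym iota a b c x y s).
Local Notation T := (Tsym iota a b c x y s).
Local Notation line i j := ((1 <= i <= N) && (1 <= j <= Ns i))%N.

Lemma brN i k : br a b i k = - br a b k i.
Proof. by rewrite /br opprB. Qed.

Lemma iota_br_neq0 i j k l : line i j -> line k l -> i != k -> iota (br a b i k) != 0.
Proof. by move=> /andP[i_in _] /andP[k_in _] ik; rewrite fmorph_eq0 br_neq0. Qed.

Lemma line_neq0 i j : line i j -> L i j != 0.
Proof. by case/andP; apply: L_neq0. Qed.

Definition Tfactor i j k l m := iota (br a b i m / br a b k m) * (L k l / L i j).

Lemma TsymE i j k l m n : T i j k l m n = s (Tfactor i j k l m) (Tfactor i j m n k).
Proof. by []. Qed.

Lemma TfactorE i j k l m :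
  Tfactor i j k l m = iota (br a b i m) / iota (br a b k m) * (L k l / L i j).
Proof. by rewrite /Tfactor fmorph_div. Qed.

Lemma Tfactor_neq0 i j k l m n : line i j -> line k l -> line m n ->
  i != m -> k != m -> Tfactor i j k l m != 0.
Proof.
move=> lij lkl lmn im km; rewrite TfactorE.
by rewrite !mulf_neq0 ?invr_eq0 ?(iota_br_neq0 lij lmn) ?(iota_br_neq0 lkl lmn) ?line_neq0.
Qed.

Lemma T_swap23 i j k l m n : line i j -> line k l -> line m n ->
  i != k -> k != m -> i != m -> T i j k l m n = - T i j m n k l.
Proof.
move=> lij lkl lmn ik km im.
by rewrite !TsymE symbolC ?(Tfactor_neq0 lij lkl lmn) ?(Tfactor_neq0 lij lmn lkl) // eq_sym.
Qed.

Lemma TfactorV i j k l m : Tfactor k l i j m = (Tfactor i j k l m)^-1.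
Proof. by rewrite /Tfactor invfM -fmorphV !invf_div. Qed.

Lemma T_swap12 i j k l m n : line i j -> line k l -> line m n ->
  i != k -> k != m -> i != m -> T i j k l m n = - T k l i j m n.
Proof.
move=> lij lkl lmn ik km im.
have Lij := line_neq0 lij; have Lkl := line_neq0 lkl.
have ikm := iota_br_neq0 lij lmn im; have kkm := iota_br_neq0 lkl lmn km.
rewrite !TsymE (TfactorV i j k l m).
have -> : Tfactor k l m n i = - (Tfactor i j k l m)^-1 * Tfactor i j m n k.
  by rewrite !TfactorE (brN k i) (brN m i) (brN m k) !rmorphN; field_nz.
by rewrite (symbolV_oppr hs) ?opprK ?(Tfactor_neq0 lij lkl lmn) ?(Tfactor_neq0 lij lmn lkl) // eq_sym.
Qed.

Lemma T_cocycle d0 j0 d1 j1 d2 j2 d3 j3 :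
  line d0 j0 -> line d1 j1 -> line d2 j2 -> line d3 j3 ->
  d0 != d1 -> d0 != d2 -> d0 != d3 -> d1 != d2 -> d1 != d3 -> d2 != d3 ->
  T d1 j1 d2 j2 d3 j3 - T d0 j0 d2 j2 d3 j3 + T d0 j0 d1 j1 d3 j3 - T d0 j0 d1 j1 d2 j2 = 0.
Proof.
move=> l0 l1 l2 l3 d01 d02 d03 d12 d13 d23.
rewrite !TsymE !TfactorE (brN d3 d2) (brN d3 d1) (brN d2 d1) !rmorphN.
apply: (symbol_cocycle hs); rewrite ?line_neq0 //; try by apply: iota_br_neq0; eassumption.
by rewrite -!rmorphM -rmorphD /br; congr (iota _); ring.
Qed.

Lemma line_base i j : line i j -> line i 1.
Proof. by case/andP=> i_in _; rewrite i_in /= Ns_gt0. Qed.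

Lemma R_second_difference i j j' k l l' m n :
  line i j -> line i j' -> line k l -> line k l' -> line m n ->
  i != k -> k != m -> i != m ->
  T i j k l m n - T i j k l' m n - (T i j' k l m n - T i j' k l' m n) = R i j' j k l' l.
Proof.
move=> lij lij' lkl lkl' lmn ik km im.
rewrite !TsymE !TfactorE; apply: (symbol_second_difference hs); rewrite ?line_neq0 //.
  by rewrite mulf_neq0 ?invr_eq0 //; apply: iota_br_neq0; eassumption.
by rewrite mulf_neq0 ?invr_eq0 //; apply: iota_br_neq0; try eassumption; rewrite eq_sym.
Qed.

Lemma R_expand i j k l m n : line i j -> line i k -> line l m -> line l n ->
  R i j k l m n = R i j 1%N l m 1%N - R i j 1%N l n 1%N - (R i k 1%N l m 1%N - R i k 1%N l n 1%N).
Proof.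
move=> lij lik llm lln.
have Li1 := line_neq0 (line_base lij); have Ll1 := line_neq0 (line_base llm).
have Lij := line_neq0 lij; have Lik := line_neq0 lik.
have Llm := line_neq0 llm; have Lln := line_neq0 lln.
rewrite /Rsym -(symbol_div_div hs) ?mulf_neq0 ?invr_eq0 //.
by congr (s _ _); field_nz.
Qed.

Lemma R_inv i j k l m n : line i j -> line i k -> line l m -> line l n ->
  R i j k l m n = R i k j l n m.
Proof.
move=> lij lik llm lln; rewrite /Rsym -(symbolVV hs) ?invf_div //.
  by rewrite mulf_neq0 ?invr_eq0 ?line_neq0.
by rewrite mulf_neq0 ?invr_eq0 ?line_neq0.
Qed.

Lemma R_swap i j k l m n : line i j -> line i k -> line l m -> line l n ->
  R i j k l m n = - R l m n i j k.
Proof.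
move=> lij lik llm lln; rewrite /Rsym (symbolC hs) //.
  by rewrite mulf_neq0 ?invr_eq0 ?line_neq0.
by rewrite mulf_neq0 ?invr_eq0 ?line_neq0.
Qed.

Definition small_gen (v : G) : Prop :=
  [\/ (exists j m,
         [/\ (1 < j <= Ns 1)%N, (1 < m <= Ns 2)%N & v = R 1%N 1%N j 2%N 1%N m]),
      (exists k l m n,
         [/\ (2 <= k)%N, (k < m <= N)%N, (1 <= l <= Ns k)%N,
             (1 <= n <= Ns m)%N & v = T 1%N 1%N k l m n])
    | (exists j m n,
         [/\ (2 <= j <= Ns 1)%N, (3 <= m <= N)%N,
             (1 <= n <= Ns m)%N & v = T 1%N j 2%N 1%N m n])].

Local Notation span := (in_span small_gen).

Lemma span_R_gen j m : (1 < j <= Ns 1)%N -> (1 < m <= Ns 2)%N -> span (R 1%N 1%N j 2%N 1%N m).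
Proof. by move=> j_in m_in; apply/in_span_gen/Or31; exists j, m. Qed.

Lemma span_T11_gen k l m n : (2 <= k)%N -> (k < m <= N)%N ->
  (1 <= l <= Ns k)%N -> (1 <= n <= Ns m)%N -> span (T 1%N 1%N k l m n).
Proof. by move=> k2 km l_in n_in; apply/in_span_gen/Or32; exists k, l, m, n. Qed.

Lemma span_T21_gen j m n : (2 <= j <= Ns 1)%N -> (3 <= m <= N)%N ->
  (1 <= n <= Ns m)%N -> span (T 1%N j 2%N 1%N m n).
Proof. by move=> j_in m3 n_in; apply/in_span_gen/Or33; exists j, m, n. Qed.

Lemma line_1_1 : line 1 1.
Proof. by rewrite /= Ns_gt0 //=; lia. Qed.

Lemma line_2_1 : line 2 1.
Proof. by rewrite /= Ns_gt0 //=; lia. Qed.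

Lemma span_T_from2 i j k l m n : (2 <= i)%N -> (i < k)%N -> (k < m <= N)%N ->
  (1 <= j <= Ns i)%N -> (1 <= l <= Ns k)%N -> (1 <= n <= Ns m)%N -> span (T i j k l m n).
Proof.
move=> i2 ik /andP[km mN] j_in l_in n_in.
have /subr0_eq/(canRL (addrK _))/(canRL (subrK _)) -> :
    T i j k l m n - T 1%N 1%N k l m n + T 1%N 1%N i j m n - T 1%N 1%N i j k l = 0.
  by apply: T_cocycle; rewrite ?line_1_1 /= ?j_in ?l_in ?n_in ?andbT //; lia.
by apply: in_spanD; [apply: in_spanB|]; apply: span_T11_gen => //; lia.
Qed.

Lemma span_T_sorted i j k l m n : (1 <= i)%N -> (i < k)%N -> (k < m <= N)%N ->
  (1 <= j <= Ns i)%N -> (1 <= l <= Ns k)%N -> (1 <= n <= Ns m)%N -> span (T i j k l m n).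
Proof.
move=> i1 ik km j_in l_in n_in.
have /andP[_ Ns2] := line_2_1.
have [i2|] := leqP 2 i; first exact: span_T_from2.
rewrite ltnS => i_le1; have ? : i = 1%N by lia.
subst i.
have [j2|j_le1] := leqP 2 j; last first.
  have -> : j = 1%N by lia.
  by apply: span_T11_gen => //; lia.
have [k3|] := leqP 3 k.
  have /subr0_eq/(canRL (addrK _))/(canRL (subrK _))/esym/(canRL (addKr _)) -> :
      T 2%N 1%N k l m n - T 1%N j k l m n + T 1%N j 2%N 1%N m n - T 1%N j 2%N 1%N k l = 0.
    by apply: T_cocycle; rewrite ?line_2_1 /= ?j_in ?l_in ?n_in ?andbT //; lia.
  apply: in_spanD; first apply/in_spanN/in_spanB.
  - by apply: span_T21_gen => //; lia.
  - by apply: span_T21_gen => //; lia.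
  - by apply: span_T_from2 => //; lia.
rewrite ltnS => k_le2; have ? : k = 2%N by lia.
subst k.
have [l2|l_le1] := leqP 2 l; last first.
  have -> : l = 1%N by lia.
  by apply: span_T21_gen => //; lia.
have second_diff : T 1%N j 2%N l m n - T 1%N j 2%N 1%N m n
    - (T 1%N 1%N 2%N l m n - T 1%N 1%N 2%N 1%N m n) = R 1%N 1%N j 2%N 1%N l.
  by apply: R_second_difference; rewrite ?line_1_1 ?line_2_1 /= ?j_in ?l_in ?n_in ?andbT //; lia.
apply: (in_span_subr (v := T 1%N j 2%N 1%N m n)); last by apply: span_T21_gen => //; lia.
apply: (in_span_subr (v := T 1%N 1%N 2%N l m n - T 1%N 1%N 2%N 1%N m n)).
  by rewrite second_diff; apply: span_R_gen => //; lia.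
by apply: in_spanB; apply: span_T11_gen => //; lia.
Qed.

Lemma span_T_lt i j k l m n : line i j -> line k l -> line m n ->
  (i < k)%N -> k != m -> i != m -> span (T i j k l m n).
Proof.
move=> lij lkl lmn lt_ik km im; have ik : i != k by rewrite ltn_eqF.
have sorted p q r u v w : line p q -> line r u -> line v w -> (p < r < v)%N ->
    span (T p q r u v w).
  move=> /andP[/andP[p1 _] pq] /andP[_ ru] /andP[/andP[_ vN] vw] /andP[pr rv].
  by apply: span_T_sorted => //; rewrite rv.
have [lt_km|lt_mk|eq_km] := ltngtP k m; last by rewrite eq_km eqxx in km.
- by apply: sorted => //; rewrite lt_ik.
- rewrite (T_swap23 lij lkl lmn) //; apply: in_spanN.
  have [lt_im|lt_mi|eq_im] := ltngtP i m; last by rewrite eq_im eqxx in im.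
  + by apply: sorted => //; rewrite lt_im.
  + have mk : m != k by rewrite eq_sym.
    rewrite (T_swap12 lij lmn lkl) //; apply: in_spanN.
    by apply: sorted => //; rewrite lt_mi.
Qed.

Lemma span_T i j k l m n : line i j -> line k l -> line m n ->
  i != k -> k != m -> i != m -> span (T i j k l m n).
Proof.
move=> lij lkl lmn ik km im.
have [lt_ik|lt_ki|eq_ik] := ltngtP i k; last by rewrite eq_ik eqxx in ik.
- exact: span_T_lt.
- by rewrite (T_swap12 lij lkl lmn) //; apply/in_spanN/span_T_lt.
Qed.

Lemma R_diag_l i j l m n : line i j -> line l m -> line l n -> R i j j l m n = 0.
Proof.
move=> lij llm lln; have Lij := line_neq0 lij; have Llm := line_neq0 llm.
have Lln := line_neq0 lln.
by rewrite /Rsym divff // (symbol1l hs) // mulf_neq0 ?invr_eq0.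
Qed.

Lemma R_diag_r i j k l m : line i j -> line i k -> line l m -> R i j k l m m = 0.
Proof.
move=> lij lik llm; have Lij := line_neq0 lij; have Lik := line_neq0 lik.
have Llm := line_neq0 llm.
by rewrite /Rsym divff // (symbol1r hs) // mulf_neq0 ?invr_eq0.
Qed.

Lemma span_R_base i j l m : line i j -> line l m -> i != l -> span (R i j 1%N l m 1%N).
Proof.
move=> lij llm il; have li1 := line_base lij; have ll1 := line_base llm.
have [j1|j1] := eqVneq j 1%N; first by rewrite j1 R_diag_l //; apply: in_span0.
have [m1|m1] := eqVneq m 1%N; first by rewrite m1 R_diag_r //; apply: in_span0.
have via t : line t 1%N -> i != t -> l != t -> span (R i j 1%N l m 1%N).
  move=> lt1 it lt.
  rewrite -(R_second_difference (j := 1%N) (j' := j) (l := 1%N) (l' := m) (m := t) (n := 1%N)) //.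
  by apply: in_spanB; apply: in_spanB; apply: span_T.
have [i1|i1] := eqVneq i 1%N.
  subst i; have [l2|l2] := eqVneq l 2%N; last by apply: via line_2_1 _ _.
  subst l; rewrite R_inv //; apply: span_R_gen.
    by case/andP: lij => _; lia.
  by case/andP: llm => _; lia.
have [l1|l1] := eqVneq l 1%N; last exact: via line_1_1 _ _.
subst l; have [i2|i2] := eqVneq i 2%N; last by apply: via line_2_1 _ _.
subst i; rewrite R_swap // R_inv //; apply/in_spanN/span_R_gen.
  by case/andP: llm => _; lia.
by case/andP: lij => _; lia.
Qed.

Lemma span_R i j k l m n : line i j -> line i k -> line l m -> line l n ->
  i != l -> span (R i j k l m n).
Proof.
move=> lij lik llm lln il; rewrite R_expand //.
by apply: in_spanB; apply: in_spanB; apply: span_R_base.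
Qed.

End Generators.

Theorem proposition3p2
  (K F : fieldType) (iota : {rmorphism K -> F})
  (N : nat) (Ns : nat -> nat) (a b : nat -> K) (c : nat -> nat -> K) (lam : K)
  (x y : F)
  (hN : (2 <= N)%N)
  (hNs : forall i, (1 <= i <= N)%N -> (1 <= Ns i)%N)
  (hab : forall i, (1 <= i <= N)%N -> (a i, b i) != (0, 0))
  (hbr : forall i k, (1 <= i <= N)%N -> (1 <= k <= N)%N -> i != k -> br a b i k != 0)
  (hdist : forall i j k l, (1 <= i <= N)%N -> (1 <= j <= Ns i)%N ->
     (1 <= k <= N)%N -> (1 <= l <= Ns k)%N -> (i, j) != (k, l) ->
     ~ (exists mu : K, [/\ a i = mu * a k, b i = mu * b k & c i j = mu * c k l]))
  (hlam : lam != 0)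
  (hf : eval2 iota x y (fpoly a b c N Ns lam) = 0)
  (hker : forall p, eval2 iota x y p = 0 ->
     exists q, p = q * fpoly a b c N Ns lam)
  (hgen : forall z : F, exists p q,
     eval2 iota x y q != 0 /\ z = eval2 iota x y p / eval2 iota x y q)
  (G : zmodType) (s : F -> F -> G) (hs : steinberg s) :
  let R := Rsym iota a b c x y s in
  let T := Tsym iota a b c x y s in
  let allgens := fun v : G =>
    (exists i j k l m n,
       [&& (1 <= i <= N)%N, (1 <= l <= N)%N, i != l,
           (1 <= j <= Ns i)%N, (1 <= k <= Ns i)%N,
           (1 <= m <= Ns l)%N & (1 <= n <= Ns l)%N] /\ v = R i j k l m n)
    \/
    (exists i j k l m n,
       [&& (1 <= i <= N)%N, (1 <= k <= N)%N, (1 <= m <= N)%N,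
           i != k, k != m, i != m,
           (1 <= j <= Ns i)%N, (1 <= l <= Ns k)%N &
           (1 <= n <= Ns m)%N] /\ v = T i j k l m n) in
  let smallgens := fun v : G =>
    [\/ (exists j m,
           [/\ (1 < j <= Ns 1)%N, (1 < m <= Ns 2)%N & v = R 1%N 1%N j 2%N 1%N m]),
        (exists k l m n,
           [/\ (2 <= k)%N, (k < m <= N)%N, (1 <= l <= Ns k)%N,
               (1 <= n <= Ns m)%N & v = T 1%N 1%N k l m n])
      | (exists j m n,
           [/\ (2 <= j <= Ns 1)%N, (3 <= m <= N)%N,
               (1 <= n <= Ns m)%N & v = T 1%N j 2%N 1%N m n])] in
  forall v : G, in_span allgens v <-> in_span smallgens v.
Proof.
move=> R T allgens smallgens v.
have L_neq0 := LF_neq0 hf.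
split; apply: in_span_trans => g.
  case=> [] [i [j [k [l [m [n [cond ->]]]]]]].
    case/and5P: cond => i_in l_in il j_in /and3P[k_in m_in n_in].
    by apply: (span_R hs hN hNs hbr L_neq0); rewrite ?i_in ?l_in ?j_in ?k_in ?m_in ?n_in.
  case/and5P: cond => i_in k_in m_in ik /and5P[km im j_in l_in n_in].
  by apply: (span_T hs hN hNs hbr L_neq0); rewrite ?i_in ?k_in ?m_in ?j_in ?l_in ?n_in.
move=> small_g; apply: in_span_gen; have Ns1 := hNs 1%N; have Ns2 := hNs 2%N.
case: small_g => [[j [m [j_in m_in ->]]] | [k [l [m [n [k2 km l_in n_in ->]]]]]
                | [j [m [n [j_in m3 n_in ->]]]]].
- by left; exists 1%N, 1%N, j, 2%N, 1%N, m; split => //; lia.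
- by right; exists 1%N, 1%N, k, l, m, n; split => //; lia.
- by right; exists 1%N, j, 2%N, 1%N, m, n; split => //; lia.
Qed.
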